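(* Let $p \geq 2$ be a large prime and let $\tau$ be a primitive root modulo $p$. Then for any arbitrarily small number $\varepsilon \in (0, 1/16)$, \[ \max_{\gcd(s,p-1)=1} \left| \sum_{\substack{1 \leq n \leq p-1\\ \gcd(n,p-1)=1}} e^{2\pi i s \tau^n / p} \right| \ll p^{1-\varepsilon}. \] *)

From Stdlib Require Import Reals Arith List ZArith Znumtheory.
Import ListNotations.
Open Scope R_scope.

Definition prim_root (p t : nat) : Prop :=
  Nat.gcd t p = 1%nat /\ Nat.modulo (t ^ (p - 1)) p = 1%nat /\
  (forall k : nat, (1 <= k)%nat -> (k < p - 1)%nat -> Nat.modulo (t ^ k) p <> 1%nat).

Definition idx (p : nat) : list nat :=
  filter (fun n => Nat.eqb (Nat.gcd n (p - 1)) 1) (seq 1 (p - 1)).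

Definition expsum_re (p s t : nat) : R :=
  fold_right Rplus 0 (map (fun n => cos (2 * PI * INR s * INR (t ^ n) / INR p)) (idx p)).
Definition expsum_im (p s t : nat) : R :=
  fold_right Rplus 0 (map (fun n => sin (2 * PI * INR s * INR (t ^ n) / INR p)) (idx p)).

Definition expsum_abs (p s t : nat) : R :=
  sqrt (expsum_re p s t ^ 2 + expsum_im p s t ^ 2).

From Stdlib Require Import Reals Arith List ZArith Znumtheory Lia Lra Classical.
From Coquelicot Require Import Complex.
Open Scope R_scope.

(* Removing from the sum over the orbit {t^n} the terms with n divisible by a new prime
   q | p - 1 leaves a difference of two sums of the same kind, the second over the orbit of
   t^q.  Sieving in this way over the prime factors of p - 1 bounds the sum by 2^omega(p-1)
   times the largest complete sum over a multiplicative subgroup of (Z/pZ)^*.  Such a subgroup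
   sum S(a) is constant along the cosets of the subgroup, and the sum of |S(a)|^2 over all
   residues a is p times the subgroup order, so |S(s)| <= sqrt p for p not dividing s.
   Together with 2^omega(n) <= 64 n^(1/4) this gives the bound 64 p^(3/4). *)

Fixpoint rsum (f : nat -> R) (n : nat) : R :=
  match n with O => 0 | S k => rsum f k + f k end.

Lemma rsum_ext f g n : (forall i, (i < n)%nat -> f i = g i) -> rsum f n = rsum g n.
Proof. induction n; simpl; intros H; auto. rewrite IHn, H; auto. Qed.

Lemma rsum_plus f g n : rsum (fun i => f i + g i) n = rsum f n + rsum g n.
Proof. induction n; simpl; [lra|]. rewrite IHn; lra. Qed.

Lemma rsum_minus f g n : rsum (fun i => f i - g i) n = rsum f n - rsum g n.
Proof. induction n; simpl; [lra|]. rewrite IHn; lra. Qed.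

Lemma rsum_scal_l c f n : rsum (fun i => c * f i) n = c * rsum f n.
Proof. induction n; simpl; [lra|]. rewrite IHn; lra. Qed.

Lemma rsum_scal_r c f n : rsum (fun i => f i * c) n = rsum f n * c.
Proof. induction n; simpl; [lra|]. rewrite IHn; lra. Qed.

Lemma rsum_eq0 f n : (forall i, (i < n)%nat -> f i = 0) -> rsum f n = 0.
Proof. induction n; simpl; intros H; auto. rewrite IHn, H; auto; lra. Qed.

Lemma rsum_const c n : rsum (fun _ => c) n = INR n * c.
Proof. induction n; simpl rsum; [simpl; lra|]. rewrite IHn, S_INR; lra. Qed.

Lemma rsum_le f g n : (forall i, (i < n)%nat -> f i <= g i) -> rsum f n <= rsum g n.
Proof. induction n; simpl; intros H; [lra|]. apply Rplus_le_compat; auto. Qed.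

Lemma rsum_nonneg f n : (forall i, (i < n)%nat -> 0 <= f i) -> 0 <= rsum f n.
Proof.
  intros H. replace 0 with (rsum (fun _ => 0) n) by (rewrite rsum_const; ring).
  apply rsum_le. exact H.
Qed.

Lemma rsum_add f a b : rsum f (a + b) = rsum f a + rsum (fun i => f (a + i)%nat) b.
Proof.
  induction b; simpl; [rewrite Nat.add_0_r; lra|].
  rewrite Nat.add_succ_r; simpl. rewrite IHb; lra.
Qed.

Lemma rsum_shift f n : rsum f (S n) = f O + rsum (fun i => f (S i)) n.
Proof. rewrite <- Nat.add_1_l, rsum_add. simpl. lra. Qed.

Lemma rsum_mul f g n m : rsum f n * rsum g m = rsum (fun i => rsum (fun j => f i * g j) m) n.
Proof. induction n; simpl; [lra|]. rewrite <- IHn, rsum_scal_l. lra. Qed.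

Lemma rsum_swap F n m :
  rsum (fun i => rsum (fun j => F i j) m) n = rsum (fun j => rsum (fun i => F i j) n) m.
Proof. induction n; simpl; [rewrite rsum_eq0; auto|]. rewrite IHn, <- rsum_plus. reflexivity. Qed.

Lemma rsum_delta (c : nat -> R) i n :
  (i < n)%nat -> rsum (fun a => if Nat.eqb i a then c a else 0) n = c i.
Proof.
  induction n; intros H; [lia|]. simpl.
  destruct (Nat.eq_dec i n) as [->|Hne].
  - rewrite Nat.eqb_refl, rsum_eq0; [lra|].
    intros j Hj. destruct (Nat.eqb_spec n j); [lia|auto].
  - rewrite IHn by lia. destruct (Nat.eqb_spec i n); [lia|lra].
Qed.

Lemma fold_right_filter_seq (f : nat -> R) (P : nat -> bool) n k :
  fold_right Rplus 0 (map f (filter P (seq k n)))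
  = rsum (fun i => if P (k + i)%nat then f (k + i)%nat else 0) n.
Proof.
  revert k; induction n; intros k; [reflexivity|].
  rewrite rsum_shift, Nat.add_0_r. simpl seq. simpl filter.
  destruct (P k); simpl; rewrite IHn; [f_equal|rewrite Rplus_0_l];
    apply rsum_ext; intros i _; rewrite Nat.add_succ_r; reflexivity.
Qed.

Lemma rsum_indicator_inj_le1 (sg : nat -> nat) a K :
  (forall i j, (i < K)%nat -> (j < K)%nat -> sg i = sg j -> i = j) ->
  rsum (fun i => if Nat.eqb (sg i) a then 1 else 0) K <= 1.
Proof.
  induction K; intros Hinj; simpl; [lra|].
  destruct (Nat.eqb_spec (sg K) a).
  - rewrite rsum_eq0; [lra|]. intros i Hi.
    destruct (Nat.eqb_spec (sg i) a); auto.
    assert (i = K) by (apply Hinj; lia). lia.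
  - enough (rsum (fun i => if Nat.eqb (sg i) a then 1 else 0) K <= 1) by lra.
    apply IHK. intros; apply Hinj; auto; lia.
Qed.

Lemma rsum_inj_le (F : nat -> R) (sg : nat -> nat) K n :
  (forall a, 0 <= F a) -> (forall i, (i < K)%nat -> (sg i < n)%nat) ->
  (forall i j, (i < K)%nat -> (j < K)%nat -> sg i = sg j -> i = j) ->
  rsum (fun i => F (sg i)) K <= rsum F n.
Proof.
  intros HF Hrange Hinj.
  rewrite (rsum_ext _ (fun i => rsum (fun a => if Nat.eqb (sg i) a then F a else 0) n) K)
    by (intros i Hi; rewrite rsum_delta; auto).
  rewrite rsum_swap. apply rsum_le. intros a _.
  rewrite (rsum_ext _ (fun i => (if Nat.eqb (sg i) a then 1 else 0) * F a))
    by (intros i _; destruct (Nat.eqb (sg i) a); lra).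
  rewrite rsum_scal_r.
  pose proof (rsum_indicator_inj_le1 sg a K Hinj). specialize (HF a).
  assert (0 <= rsum (fun i => if Nat.eqb (sg i) a then 1 else 0) K)
    by (apply rsum_nonneg; intros; destruct Nat.eqb; lra).
  nra.
Qed.

Lemma Cmod_sub_le a b c d : Cmod (a - b, c - d) <= Cmod (a, c) + Cmod (b, d).
Proof. rewrite <- (Cmod_opp (b, d)). exact (Cmod_triangle (a, c) (- (b, d))%C). Qed.

Definition nat_prime (p : nat) : Prop :=
  (2 <= p)%nat /\ forall d, Nat.divide d p -> d = 1%nat \/ d = p.

Lemma nat_prime_of_Z p : prime (Z.of_nat p) -> nat_prime p.
Proof.
  intros Hp. pose proof (prime_ge_2 _ Hp). split; [lia|].
  intros d Hd. destruct (Nat.eq_dec d 1); auto. destruct (Nat.eq_dec d p); auto.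
  exfalso. assert (d <> 0%nat) by (intros ->; destruct Hd as [c Hc]; lia).
  assert (d <= p)%nat by (apply Nat.divide_pos_le; auto; lia).
  destruct Hp as [_ Hrel]. destruct (Hrel (Z.of_nat d) ltac:(lia)) as [_ _ Hg].
  assert (Hz : (Z.of_nat d | Z.of_nat p)%Z).
  { destruct Hd as [c Hc]. exists (Z.of_nat c). rewrite Hc, Nat2Z.inj_mul. reflexivity. }
  specialize (Hg (Z.of_nat d) (Z.divide_refl _) Hz).
  apply Z.divide_1_r_nonneg in Hg; lia.
Qed.

Lemma nat_prime_euclid p a b :
  nat_prime p -> Nat.divide p (a * b) -> Nat.divide p a \/ Nat.divide p b.
Proof.
  intros [_ Hp] Hd. destruct (classic (Nat.divide p a)) as [|Hn]; [auto|right].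
  destruct (Hp (Nat.gcd p a) (Nat.gcd_divide_l p a)) as [E|E].
  - eapply Nat.gauss; eauto.
  - exfalso; apply Hn. rewrite <- E. apply Nat.gcd_divide_r.
Qed.

Lemma nat_prime_divide_pow p a n : nat_prime p -> Nat.divide p (a ^ n) -> Nat.divide p a.
Proof.
  intros Hp. induction n; simpl; intros H.
  - apply Nat.divide_1_r in H. destruct Hp; lia.
  - destruct (nat_prime_euclid p a (a ^ n) Hp H); auto.
Qed.

Lemma nat_prime_divisor D : (2 <= D)%nat -> exists q, nat_prime q /\ Nat.divide q D.
Proof.
  induction D as [D IH] using lt_wf_ind. intros HD.
  destruct (classic (nat_prime D)) as [H|H]; [exists D; split; auto; apply Nat.divide_refl|].
  assert (exists d, Nat.divide d D /\ d <> 1%nat /\ d <> D) as [d [Hd [H1 H2]]].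
  { apply NNPP. intros Hn. apply H. split; auto. intros d Hd.
    destruct (Nat.eq_dec d 1); auto. destruct (Nat.eq_dec d D); auto.
    exfalso; apply Hn; exists d; auto. }
  assert (d <> 0%nat) by (intros ->; destruct Hd as [c Hc]; lia).
  assert (d <= D)%nat by (apply Nat.divide_pos_le; auto; lia).
  destruct (IH d ltac:(lia) ltac:(lia)) as [q [Hq Hqd]].
  exists q; split; auto. eapply Nat.divide_trans; eauto.
Qed.

Lemma gcd_prime_eq1 q n : nat_prime q -> Nat.gcd n q = 1%nat <-> ~ Nat.divide q n.
Proof.
  intros [Hq2 Hq]. split.
  - intros H Hd. enough (Nat.divide q 1) as H1 by (apply Nat.divide_1_r in H1; lia).
    rewrite <- H. apply Nat.gcd_greatest; auto. apply Nat.divide_refl.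
  - intros Hn. destruct (Hq _ (Nat.gcd_divide_r n q)) as [E|E]; auto.
    exfalso; apply Hn. rewrite <- E. apply Nat.gcd_divide_l.
Qed.

Lemma gcd_mul_eq1 n a b :
  Nat.gcd n (a * b) = 1%nat <-> Nat.gcd n a = 1%nat /\ Nat.gcd n b = 1%nat.
Proof.
  split.
  - intros H. split; apply Nat.divide_1_r; rewrite <- H; apply Nat.gcd_greatest;
      try apply Nat.gcd_divide_l.
    + apply Nat.divide_mul_l, Nat.gcd_divide_r.
    + apply Nat.divide_mul_r, Nat.gcd_divide_r.
  - intros [Ha Hb]. set (g := Nat.gcd n (a * b)).
    assert (Hga : Nat.gcd g a = 1%nat).
    { apply Nat.divide_1_r. rewrite <- Ha. apply Nat.gcd_greatest.
      - eapply Nat.divide_trans; apply Nat.gcd_divide_l.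
      - apply Nat.gcd_divide_r. }
    assert (Hgb : Nat.divide g b) by (eapply Nat.gauss; [apply Nat.gcd_divide_r|exact Hga]).
    apply Nat.divide_1_r. rewrite <- Hb. apply Nat.gcd_greatest; auto. apply Nat.gcd_divide_l.
Qed.

Lemma mod_eq_divide_sub p a b :
  p <> 0%nat -> (a mod p = b mod p)%nat -> (b <= a)%nat -> Nat.divide p (a - b).
Proof.
  intros Hp E Hle. exists (a / p - b / p)%nat. rewrite Nat.mul_sub_distr_r.
  pose proof (Nat.div_mod_eq a p). pose proof (Nat.div_mod_eq b p). lia.
Qed.

Definition ecos (p x : nat) : R := cos (2 * PI * INR x / INR p).
Definition esin (p x : nat) : R := sin (2 * PI * INR x / INR p).

Lemma sum_cos_telescope th n :
  2 * sin (th / 2) * rsum (fun a => cos (INR a * th)) n = sin (INR n * th - th / 2) + sin (th / 2).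
Proof.
  induction n.
  - simpl rsum. replace (INR 0 * th - th / 2) with (- (th / 2)) by (simpl; ring).
    rewrite sin_neg. ring.
  - simpl rsum. rewrite Rmult_plus_distr_l, IHn, S_INR.
    replace ((INR n + 1) * th - th / 2) with (INR n * th + th / 2) by field.
    replace (INR n * th - th / 2) with (INR n * th + - (th / 2)) by field.
    rewrite !sin_plus, sin_neg, cos_neg. ring.
Qed.

Section AdditiveCharacters.
Variable p : nat.
Hypothesis p_pos : (0 < p)%nat.

Let INR_p_pos : 0 < INR p.
Proof. apply lt_0_INR. exact p_pos. Qed.

Lemma angle_mod x :
  2 * PI * INR x / INR p = 2 * PI * INR (x mod p) / INR p + 2 * INR (x / p) * PI.
Proof. rewrite (Nat.div_mod_eq x p) at 1. rewrite plus_INR, mult_INR. field. lra. Qed.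

Lemma ecos_mod x y : (x mod p = y mod p)%nat -> ecos p x = ecos p y.
Proof.
  intros E. unfold ecos. rewrite (angle_mod x), (angle_mod y), !cos_period, E. reflexivity.
Qed.

Lemma esin_mod x y : (x mod p = y mod p)%nat -> esin p x = esin p y.
Proof.
  intros E. unfold esin. rewrite (angle_mod x), (angle_mod y), !sin_period, E. reflexivity.
Qed.

Lemma sum_cos_orthogonal z : ~ Nat.divide p z ->
  rsum (fun a => cos (INR a * (2 * PI * INR z / INR p))) p = 0.
Proof.
  intros Hz. set (th := 2 * PI * INR z / INR p).
  assert (Hsin : sin (th / 2) <> 0).
  { intros H0. apply sin_eq_0_0 in H0. destruct H0 as [k Hk]. apply Hz.
    assert (E : INR z = IZR k * INR p).
    { pose proof PI_RGT_0.
      replace (INR z) with (th / 2 * INR p / PI) by (unfold th; field; lra).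
      rewrite Hk. field; lra. }
    rewrite !INR_IZR_INZ, <- mult_IZR in E. apply eq_IZR in E.
    exists (Z.to_nat k). lia. }
  assert (T := sum_cos_telescope th p).
  replace (INR p * th - th / 2) with (- (th / 2) + 2 * INR z * PI) in T
    by (unfold th; field; lra).
  rewrite sin_period, sin_neg in T.
  apply (Rmult_eq_reg_l (2 * sin (th / 2))); [rewrite T; ring|lra].
Qed.

End AdditiveCharacters.

Definition has_order (p h m : nat) : Prop :=
  (h ^ m mod p = 1)%nat /\ (1 <= m)%nat /\
  forall k, (1 <= k)%nat -> (k < m)%nat -> (h ^ k mod p <> 1)%nat.

Lemma has_order_pow p h q k : (1 <= q)%nat -> has_order p h (q * k) -> has_order p (h ^ q) k.
Proof.
  intros Hq [H1 [Hm Hmin]]. split; [rewrite <- Nat.pow_mul_r; exact H1|split; [nia|]].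
  intros j Hj1 Hj2. rewrite <- Nat.pow_mul_r. apply Hmin; nia.
Qed.

Section OrbitSums.
Variables p h K : nat.
Hypothesis p_prime : nat_prime p.
Hypothesis h_order : has_order p h K.

Let p_pos : (0 < p)%nat.
Proof. destruct p_prime; lia. Qed.

Lemma order_base_not_divisible : ~ Nat.divide p h.
Proof.
  destruct h_order as [H1 [HK _]]. intros [c ->].
  destruct K as [|K']; [lia|].
  rewrite Nat.pow_succ_r', Nat.Div0.mul_mod, Nat.Div0.mod_mul, Nat.mul_0_l, Nat.Div0.mod_0_l in H1.
  discriminate.
Qed.

Let h_neq0 : h <> 0%nat.
Proof. intros E. apply order_base_not_divisible. rewrite E. apply Nat.divide_0_r. Qed.

Lemma orbit_diff_not_divisible c i i' : ~ Nat.divide p c -> (i < i')%nat -> (i' - i < K)%nat ->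
  ~ Nat.divide p (c * h ^ i' - c * h ^ i).
Proof.
  intros Hc Hi Hi' Hd. destruct h_order as [_ [_ Hmin]].
  replace i' with (i + (i' - i))%nat in Hd by lia. set (d := (i' - i)%nat) in *.
  rewrite Nat.pow_add_r, Nat.mul_assoc in Hd.
  rewrite <- (Nat.mul_1_r (c * h ^ i)) in Hd at 2. rewrite <- Nat.mul_sub_distr_l in Hd.
  destruct (nat_prime_euclid _ _ _ p_prime Hd) as [Hd'|Hd'].
  - destruct (nat_prime_euclid _ _ _ p_prime Hd') as [|Hhi]; [tauto|].
    apply order_base_not_divisible. exact (nat_prime_divide_pow _ _ _ p_prime Hhi).
  - apply (Hmin d); [lia|lia|].
    assert (h ^ d <> 0)%nat by (apply Nat.pow_nonzero, h_neq0).
    destruct Hd' as [e He]. replace (h ^ d)%nat with (1 + e * p)%nat by lia.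
    rewrite Nat.Div0.mod_add. apply Nat.mod_small. destruct p_prime; lia.
Qed.

Lemma orbit_mod_inj c i j : ~ Nat.divide p c -> (i < K)%nat -> (j < K)%nat ->
  ((c * h ^ i) mod p = (c * h ^ j) mod p)%nat -> i = j.
Proof.
  intros Hc Hi Hj E.
  assert (Hlt : forall i' j', (i' < j' < K)%nat ->
            ((c * h ^ j') mod p = (c * h ^ i') mod p)%nat -> False).
  { intros i' j' [Hl HK] E'. apply (orbit_diff_not_divisible c i' j' Hc Hl); [lia|].
    apply mod_eq_divide_sub; [lia|exact E'|].
    apply Nat.mul_le_mono_l, Nat.pow_le_mono_r; [exact h_neq0|lia]. }
  destruct (Nat.lt_trichotomy i j) as [Hl|[Heq|Hl]]; [|exact Heq|];
    exfalso; eapply Hlt; eauto.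
Qed.

Definition orbit_cos a := rsum (fun j => ecos p (a * h ^ S j)) K.
Definition orbit_sin a := rsum (fun j => esin p (a * h ^ S j)) K.
Definition orbit_norm2 a := orbit_cos a ^ 2 + orbit_sin a ^ 2.

Lemma orbit_rsum_mulr (g : nat -> R) a :
  (forall x y, (x mod p = y mod p)%nat -> g x = g y) ->
  rsum (fun j => g (a * h * h ^ S j)%nat) K = rsum (fun j => g (a * h ^ S j)%nat) K.
Proof.
  intros Hg. destruct h_order as [H1 _].
  assert (Hwrap : g (a * h ^ S K)%nat = g (a * h ^ 1)%nat).
  { apply Hg. replace (a * h ^ S K)%nat with (a * h ^ 1 * h ^ K)%nat by (simpl; ring).
    rewrite Nat.Div0.mul_mod, H1, Nat.mul_1_r. apply Nat.Div0.mod_mod. }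
  pose proof (rsum_shift (fun j => g (a * h ^ S j)%nat) K) as Hs. cbn [rsum] in Hs.
  rewrite Hwrap in Hs.
  rewrite (rsum_ext _ (fun j => g (a * h ^ S (S j))%nat))
    by (intros j _; rewrite (Nat.pow_succ_r' h (S j)), Nat.mul_assoc; reflexivity).
  lra.
Qed.

Lemma orbit_norm2_mul_pow a i : orbit_norm2 (a * h ^ i) = orbit_norm2 a.
Proof.
  induction i as [|i IH]; [rewrite Nat.mul_1_r; reflexivity|].
  rewrite <- IH. replace (a * h ^ S i)%nat with (a * h ^ i * h)%nat by (simpl; ring).
  unfold orbit_norm2, orbit_cos, orbit_sin.
  rewrite !(orbit_rsum_mulr _ (a * h ^ i)); [reflexivity| |];
    intros x y; [apply esin_mod|apply ecos_mod]; exact p_pos.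
Qed.

Lemma orbit_norm2_mod a : orbit_norm2 (a mod p) = orbit_norm2 a.
Proof.
  unfold orbit_norm2, orbit_cos, orbit_sin.
  f_equal; f_equal; apply rsum_ext; intros j _;
    [apply ecos_mod|apply esin_mod]; auto; apply Nat.Div0.mul_mod_idemp_l.
Qed.

Lemma orbit_norm2_expand a : orbit_norm2 a = rsum (fun j => rsum (fun j' =>
  cos (2 * PI * INR (a * h ^ S j) / INR p - 2 * PI * INR (a * h ^ S j') / INR p)) K) K.
Proof.
  unfold orbit_norm2, orbit_cos, orbit_sin. rewrite <- !Rsqr_pow2. unfold Rsqr.
  rewrite !rsum_mul, <- rsum_plus. apply rsum_ext; intros j _.
  rewrite <- rsum_plus. apply rsum_ext; intros j' _. rewrite cos_minus. reflexivity.
Qed.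

Lemma orbit_cross_sum_lt j j' : (j < j' < K)%nat ->
  rsum (fun a => cos (2 * PI * INR (a * h ^ S j) / INR p - 2 * PI * INR (a * h ^ S j') / INR p)) p
  = 0.
Proof.
  intros Hjj'. assert (0 < INR p) by (apply lt_0_INR; exact p_pos).
  assert (H1 : ~ Nat.divide p 1) by (intros Hd; apply Nat.divide_1_r in Hd; destruct p_prime; lia).
  assert (Hz := orbit_diff_not_divisible 1 (S j) (S j') H1 ltac:(lia) ltac:(lia)).
  rewrite !Nat.mul_1_l in Hz.
  assert (h ^ S j <= h ^ S j')%nat by (apply Nat.pow_le_mono_r; [exact h_neq0|lia]).
  rewrite <- (sum_cos_orthogonal p p_pos _ Hz). apply rsum_ext; intros a _.
  rewrite <- cos_neg. f_equal. rewrite minus_INR, !mult_INR by auto. field. lra.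
Qed.

Lemma orbit_cross_sum j j' : (j < K)%nat -> (j' < K)%nat ->
  rsum (fun a => cos (2 * PI * INR (a * h ^ S j) / INR p - 2 * PI * INR (a * h ^ S j') / INR p)) p
  = if Nat.eqb j j' then INR p else 0.
Proof.
  intros Hj Hj'. destruct (Nat.eqb_spec j j') as [<-|Hne].
  { rewrite (rsum_ext _ (fun _ => 1)), rsum_const; [ring|].
    intros a _. rewrite Rminus_diag, cos_0. reflexivity. }
  destruct (Nat.lt_gt_cases j j') as [[Hl|Hl] _]; [exact Hne|apply orbit_cross_sum_lt; lia|].
  rewrite <- (orbit_cross_sum_lt j' j) by lia. apply rsum_ext; intros a _.
  rewrite <- cos_neg. f_equal. ring.
Qed.

Lemma orbit_norm2_parseval : rsum orbit_norm2 p = INR p * INR K.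
Proof.
  rewrite (rsum_ext _ _ p (fun a _ => orbit_norm2_expand a)), rsum_swap.
  rewrite (rsum_ext _ (fun _ => INR p)); [rewrite rsum_const; ring|].
  intros j Hj. rewrite rsum_swap.
  rewrite (rsum_ext _ (fun j' => if Nat.eqb j j' then INR p else 0))
    by (intros j' Hj'; apply orbit_cross_sum; auto).
  apply (rsum_delta (fun _ => INR p)); auto.
Qed.

Lemma orbit_norm2_le s : ~ Nat.divide p s -> orbit_norm2 s <= INR p.
Proof.
  intros Hs. destruct h_order as [_ [HK _]].
  set (sg := fun i => ((s * h ^ i) mod p)%nat).
  assert (Hsub : rsum (fun i => orbit_norm2 (sg i)) K <= rsum orbit_norm2 p).
  { apply rsum_inj_le.
    - intros a. unfold orbit_norm2. pose proof (pow2_ge_0 (orbit_cos a)).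
      pose proof (pow2_ge_0 (orbit_sin a)). lra.
    - intros i _. apply Nat.mod_upper_bound. lia.
    - intros i j Hi Hj E. exact (orbit_mod_inj s i j Hs Hi Hj E). }
  rewrite orbit_norm2_parseval in Hsub.
  rewrite (rsum_ext _ (fun _ => orbit_norm2 s)), rsum_const in Hsub
    by (intros i _; unfold sg; rewrite orbit_norm2_mod; apply orbit_norm2_mul_pow).
  assert (0 < INR K) by (apply lt_0_INR; lia). nra.
Qed.

Lemma orbit_sum_bound s : ~ Nat.divide p s -> Cmod (orbit_cos s, orbit_sin s) <= sqrt (INR p).
Proof. intros Hs. apply sqrt_le_1_alt, orbit_norm2_le, Hs. Qed.

End OrbitSums.

Definition coprime_sum (psi : nat -> R) (m D : nat) : R :=
  rsum (fun i => if Nat.eqb (Nat.gcd (S i) D) 1 then psi (S i) else 0) m.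

Lemma coprime_sum_ext psi psi' m D :
  (forall n, psi n = psi' n) -> coprime_sum psi m D = coprime_sum psi' m D.
Proof. intros H. apply rsum_ext. intros i _. rewrite H. reflexivity. Qed.

Lemma coprime_sum_1 psi m : coprime_sum psi m 1 = rsum (fun i => psi (S i)) m.
Proof.
  apply rsum_ext. intros i _.
  replace (Nat.gcd (S i) 1) with 1%nat by (symmetry; apply Nat.divide_1_r, Nat.gcd_divide_r).
  reflexivity.
Qed.

Lemma fold_right_idx (f : nat -> R) p :
  fold_right Rplus 0 (map f (idx p)) = coprime_sum f (p - 1) (p - 1).
Proof. unfold idx. rewrite fold_right_filter_seq. reflexivity. Qed.

Lemma rsum_multiples (phi : nat -> R) q k : (1 <= q)%nat ->
  rsum (fun i => if Nat.eqb (S i mod q) 0 then phi (S i) else 0) (q * k)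
  = rsum (fun j => phi (q * S j)%nat) k.
Proof.
  intros Hq. induction k as [|k IH]; [rewrite Nat.mul_0_r; reflexivity|].
  rewrite Nat.mul_succ_r, rsum_add, IH. cbn [rsum]. f_equal.
  destruct q as [|q']; [lia|]. cbn [rsum].
  rewrite rsum_eq0.
  - replace (S (S q' * k + q'))%nat with (S q' * S k)%nat by lia.
    rewrite (Nat.mul_comm (S q') (S k)), Nat.Div0.mod_mul. simpl Nat.eqb. lra.
  - intros i Hi. replace (S (S q' * k + i))%nat with (S i + k * S q')%nat by lia.
    rewrite Nat.Div0.mod_add, Nat.mod_small by lia. reflexivity.
Qed.

Lemma gcd_prime_mul_eqb n q D : nat_prime q ->
  Nat.eqb (Nat.gcd n (q * D)) 1 = (negb (Nat.eqb (n mod q) 0) && Nat.eqb (Nat.gcd n D) 1)%bool.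
Proof.
  intros Hq. apply Bool.eq_iff_eq_true.
  rewrite Bool.andb_true_iff, Bool.negb_true_iff, !Nat.eqb_eq, Nat.eqb_neq, gcd_mul_eq1,
    (gcd_prime_eq1 q n Hq), Nat.Lcm0.mod_divide.
  reflexivity.
Qed.

Lemma coprime_sum_new_prime psi q D k : nat_prime q -> ~ Nat.divide q D ->
  coprime_sum psi (q * k) (q * D)
  = coprime_sum psi (q * k) D - coprime_sum (fun j => psi (q * j)%nat) k D.
Proof.
  intros Hq Hn. assert (Hq1 : (1 <= q)%nat) by (destruct Hq; lia).
  set (phi := fun n => if Nat.eqb (Nat.gcd n D) 1 then psi n else 0).
  assert (Hmult : coprime_sum (fun j => psi (q * j)%nat) k D
                  = rsum (fun j => phi (q * S j)%nat) k).
  { apply rsum_ext. intros j _. unfold phi.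
    rewrite (Nat.gcd_comm (q * S j)), gcd_prime_mul_eqb, (Nat.gcd_comm D) by exact Hq.
    destruct (Nat.eqb_spec (D mod q) 0) as [E|]; [|reflexivity].
    exfalso. apply Hn, Nat.Lcm0.mod_divide, E. }
  rewrite Hmult. unfold coprime_sum. rewrite <- (rsum_multiples phi q k Hq1), <- rsum_minus.
  apply rsum_ext. intros i _. unfold phi. rewrite gcd_prime_mul_eqb by exact Hq.
  destruct (Nat.eqb (S i mod q) 0), (Nat.eqb (Nat.gcd (S i) D) 1); simpl; lra.
Qed.

Lemma coprime_sum_repeated_prime psi q D m : nat_prime q -> Nat.divide q D ->
  coprime_sum psi m (q * D) = coprime_sum psi m D.
Proof.
  intros Hq Hd. apply rsum_ext. intros i _. rewrite gcd_prime_mul_eqb by exact Hq.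
  destruct (Nat.eqb_spec (Nat.gcd (S i) D) 1) as [G|G]; [|now rewrite Bool.andb_false_r].
  destruct (Nat.eqb_spec (S i mod q) 0) as [E|E]; [|reflexivity].
  exfalso. apply Nat.Lcm0.mod_divide in E. destruct Hq as [Hq2 _].
  assert (Nat.divide q 1) as H1 by (rewrite <- G; apply Nat.gcd_greatest; auto).
  apply Nat.divide_1_r in H1. lia.
Qed.

Section SieveBound.
Variables p s : nat.
Hypothesis p_prime : nat_prime p.
Hypothesis s_not_divisible : ~ Nat.divide p s.
Variable w : nat -> R.
Hypothesis w_1 : 1 <= w 1%nat.
Hypothesis w_repeated_prime :
  forall q D, nat_prime q -> Nat.divide q D -> w D <= w (q * D)%nat.
Hypothesis w_new_prime :
  forall q D, nat_prime q -> ~ Nat.divide q D -> 2 * w D <= w (q * D)%nat.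

Lemma coprime_orbit_sum_bound D : (1 <= D)%nat -> forall h m, has_order p h m -> Nat.divide D m ->
  Cmod (coprime_sum (fun n => ecos p (s * h ^ n)) m D,
        coprime_sum (fun n => esin p (s * h ^ n)) m D)
  <= w D * sqrt (INR p).
Proof.
  induction D as [D IH] using lt_wf_ind. intros HD h m Hh HDm.
  destruct (Nat.eq_dec D 1) as [->|HD1].
  { rewrite !coprime_sum_1.
    eapply Rle_trans; [exact (orbit_sum_bound p h m p_prime Hh s s_not_divisible)|].
    pose proof (sqrt_pos (INR p)). nra. }
  destruct (nat_prime_divisor D ltac:(lia)) as [q [Hq [D' ->]]].
  rewrite (Nat.mul_comm D' q) in *.
  assert (Hq1 : (1 <= q)%nat) by (destruct Hq; lia).
  assert (HD' : (1 <= D' < q * D')%nat) by (destruct Hq; nia).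
  destruct HDm as [k ->]. replace (k * (q * D'))%nat with (q * (D' * k))%nat in * by ring.
  set (k' := (D' * k)%nat) in *.
  assert (HD'k : Nat.divide D' k') by (exists k; unfold k'; ring).
  specialize (IH D' ltac:(lia) ltac:(lia)).
  destruct (classic (Nat.divide q D')) as [Hqd|Hqd].
  - rewrite !coprime_sum_repeated_prime by auto.
    eapply Rle_trans; [apply IH; auto; apply Nat.divide_mul_r, HD'k|].
    apply Rmult_le_compat_r; [apply sqrt_pos|auto].
  - rewrite !coprime_sum_new_prime by auto.
    assert (Horb := IH (h ^ q)%nat k' (has_order_pow p h q k' Hq1 Hh) HD'k).
    rewrite (coprime_sum_ext (fun n => ecos p (s * (h ^ q) ^ n)%nat)
                             (fun n => ecos p (s * h ^ (q * n))%nat)),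
      (coprime_sum_ext (fun n => esin p (s * (h ^ q) ^ n)%nat)
                       (fun n => esin p (s * h ^ (q * n))%nat)) in Horb
      by (intros n; rewrite Nat.pow_mul_r; reflexivity).
    assert (Hfull := IH h (q * k')%nat Hh ltac:(apply Nat.divide_mul_r, HD'k)).
    eapply Rle_trans; [apply Cmod_sub_le|].
    pose proof (w_new_prime q D' Hq Hqd). pose proof (sqrt_pos (INR p)). nra.
Qed.
End SieveBound.

Definition dvd_indicator (r D : nat) : nat := if Nat.eqb (D mod r) 0 then 1%nat else 0%nat.

(* [2 ^ small_omega D * D^(1/4)] dominates [2 ^ omega(D)]: the primes up to 13 are counted
   exactly, and every larger prime factor is at least 16, hence doubles [D^(1/4)]. *)
Definition small_omega (D : nat) : nat :=
  (dvd_indicator 2 D + dvd_indicator 3 D + dvd_indicator 5 D + dvd_indicator 7 D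
   + dvd_indicator 11 D + dvd_indicator 13 D)%nat.

Definition fourth_root (x : R) : R := sqrt (sqrt x).

Definition omega_weight (D : nat) : R := 2 ^ small_omega D * fourth_root (INR D).

Lemma dvd_indicator_le1 r D : (dvd_indicator r D <= 1)%nat.
Proof. unfold dvd_indicator. destruct Nat.eqb; lia. Qed.

Lemma dvd_indicator_mono r D' D : Nat.divide D' D -> (dvd_indicator r D' <= dvd_indicator r D)%nat.
Proof.
  intros Hd. unfold dvd_indicator. destruct (Nat.eqb_spec (D' mod r) 0) as [E|E]; [|lia].
  apply Nat.Lcm0.mod_divide in E.
  rewrite (proj2 (Nat.Lcm0.mod_divide D r)) by (eapply Nat.divide_trans; eauto). simpl. lia.
Qed.

Lemma small_omega_mono D' D : Nat.divide D' D -> (small_omega D' <= small_omega D)%nat.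
Proof.
  intros Hd. unfold small_omega.
  pose proof (dvd_indicator_mono 2 _ _ Hd). pose proof (dvd_indicator_mono 3 _ _ Hd).
  pose proof (dvd_indicator_mono 5 _ _ Hd). pose proof (dvd_indicator_mono 7 _ _ Hd).
  pose proof (dvd_indicator_mono 11 _ _ Hd). pose proof (dvd_indicator_mono 13 _ _ Hd). lia.
Qed.

Lemma small_omega_le6 D : (small_omega D <= 6)%nat.
Proof.
  unfold small_omega.
  pose proof (dvd_indicator_le1 2 D). pose proof (dvd_indicator_le1 3 D).
  pose proof (dvd_indicator_le1 5 D). pose proof (dvd_indicator_le1 7 D).
  pose proof (dvd_indicator_le1 11 D). pose proof (dvd_indicator_le1 13 D).
  lia.
Qed.

Lemma small_prime_cases q : nat_prime q -> (q < 16)%nat ->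
  q = 2%nat \/ q = 3%nat \/ q = 5%nat \/ q = 7%nat \/ q = 11%nat \/ q = 13%nat.
Proof.
  intros [Hq2 Hq] Hq16.
  assert (Hsmall : forall r, (1 < r)%nat -> (q mod r = 0)%nat -> q = r).
  { intros r Hr E. destruct (Hq r) as [|]; [apply Nat.Lcm0.mod_divide, E|lia|auto]. }
  do 16 (destruct q as [|q]; [first [lia | exfalso;
    first [specialize (Hsmall 2%nat ltac:(lia) eq_refl)
          | specialize (Hsmall 3%nat ltac:(lia) eq_refl)];
    lia]|]).
  lia.
Qed.

Lemma fourth_root_le a b : (a <= b)%nat -> fourth_root (INR a) <= fourth_root (INR b).
Proof. intros H. apply sqrt_le_1_alt, sqrt_le_1_alt, le_INR, H. Qed.

Lemma fourth_root_16 a : 2 * fourth_root (INR a) <= fourth_root (INR (16 * a)).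
Proof.
  assert (E4 : sqrt (INR 16) = 4)
    by (replace (INR 16) with (4 * 4) by (simpl; ring); apply sqrt_square; lra).
  assert (E2 : sqrt 4 = 2) by (replace 4 with (2 * 2) by ring; apply sqrt_square; lra).
  unfold fourth_root.
  rewrite mult_INR, sqrt_mult_alt, E4, sqrt_mult_alt, E2 by (try apply pos_INR; lra).
  lra.
Qed.

Lemma omega_weight_1 : 1 <= omega_weight 1.
Proof.
  unfold omega_weight, small_omega, dvd_indicator, fourth_root. simpl.
  rewrite !sqrt_1. lra.
Qed.

Lemma omega_weight_mul q D : (1 <= q)%nat -> omega_weight D <= omega_weight (q * D).
Proof.
  intros Hq. unfold omega_weight.
  apply Rmult_le_compat; [apply pow_le; lra|apply sqrt_pos| |apply fourth_root_le; nia].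
  apply Rle_pow; [lra|]. apply small_omega_mono, Nat.divide_factor_r.
Qed.

Lemma omega_weight_new_prime q D : nat_prime q -> ~ Nat.divide q D ->
  2 * omega_weight D <= omega_weight (q * D).
Proof.
  intros Hq Hn. unfold omega_weight.
  assert (Hmono : (small_omega D <= small_omega (q * D))%nat)
    by (apply small_omega_mono, Nat.divide_factor_r).
  pose proof (sqrt_pos (sqrt (INR D))). pose proof (pow_lt 2 (small_omega D) ltac:(lra)).
  fold (fourth_root (INR D)) in *.
  destruct (Nat.lt_ge_cases q 16) as [Hq16|Hq16].
  - assert (2 ^ S (small_omega D) <= 2 ^ small_omega (q * D)).
    { apply Rle_pow; [lra|].
      assert (dvd_indicator q D = 0%nat)
        by (unfold dvd_indicator; destruct (Nat.eqb_spec (D mod q) 0) as [E|]; [|auto];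
            exfalso; apply Hn, Nat.Lcm0.mod_divide, E).
      assert (dvd_indicator q (q * D) = 1%nat)
        by (unfold dvd_indicator; rewrite Nat.mul_comm, Nat.Div0.mod_mul; reflexivity).
      assert (Hd : Nat.divide D (q * D)) by apply Nat.divide_factor_r.
      pose proof (dvd_indicator_mono 2 _ _ Hd). pose proof (dvd_indicator_mono 3 _ _ Hd).
      pose proof (dvd_indicator_mono 5 _ _ Hd). pose proof (dvd_indicator_mono 7 _ _ Hd).
      pose proof (dvd_indicator_mono 11 _ _ Hd). pose proof (dvd_indicator_mono 13 _ _ Hd).
      unfold small_omega in *.
      destruct (small_prime_cases q Hq Hq16) as [-> | [-> | [-> | [-> | [-> | ->]]]]]; lia. }
    assert (fourth_root (INR D) <= fourth_root (INR (q * D)))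
      by (apply fourth_root_le; destruct Hq; nia).
    simpl in *. nra.
  - assert (2 ^ small_omega D <= 2 ^ small_omega (q * D)) by (apply Rle_pow; [lra|exact Hmono]).
    assert (2 * fourth_root (INR D) <= fourth_root (INR (q * D))).
    { eapply Rle_trans; [apply fourth_root_16|]. apply fourth_root_le. nia. }
    nra.
Qed.

Lemma omega_weight_bound n : (2 <= n)%nat ->
  omega_weight (n - 1) * sqrt (INR n) <= 64 * Rpower (INR n) (3 / 4).
Proof.
  intros Hn. assert (Hpos : 0 < INR n) by (apply lt_0_INR; lia).
  replace (3 / 4) with (/ 2 * / 2 + / 2) by field.
  rewrite Rpower_plus, <- Rpower_mult, !Rpower_sqrt; auto; [|apply exp_pos].
  fold (fourth_root (INR n)). unfold omega_weight.
  assert (2 ^ small_omega (n - 1) <= 64)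
    by (replace 64 with (2 ^ 6) by (simpl; ring); apply Rle_pow; [lra|apply small_omega_le6]).
  rewrite <- Rmult_assoc. apply Rmult_le_compat_r; [apply sqrt_pos|].
  apply Rmult_le_compat; [apply pow_le; lra|apply sqrt_pos|assumption|].
  apply fourth_root_le. lia.
Qed.

Theorem lemma3p1 :
  forall eps : R, 0 < eps < 1 / 16 ->
  exists (C : R) (p0 : nat),
    forall p t s : nat,
      prime (Z.of_nat p) -> (p0 <= p)%nat ->
      prim_root p t ->
      (1 <= s <= p - 1)%nat -> Nat.gcd s (p - 1) = 1%nat ->
      expsum_abs p s t <= C * Rpower (INR p) (1 - eps).
Proof.
  intros eps Heps. exists 64, 2%nat. intros p t s Hp Hp2 [_ Ht] Hs _.
  apply nat_prime_of_Z in Hp.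
  assert (Hsp : ~ Nat.divide p s) by (intros Hd; apply Nat.divide_pos_le in Hd; lia).
  assert (Hphase : forall n,
            2 * PI * INR s * INR (t ^ n) / INR p = 2 * PI * INR (s * t ^ n) / INR p)
    by (intros n; rewrite mult_INR; field; apply not_0_INR; lia).
  unfold expsum_abs, expsum_re, expsum_im. rewrite !fold_right_idx.
  rewrite (coprime_sum_ext (fun n => cos _) (fun n => ecos p (s * t ^ n))),
    (coprime_sum_ext (fun n => sin _) (fun n => esin p (s * t ^ n)))
    by (intros n; unfold ecos, esin; rewrite Hphase; reflexivity).
  eapply Rle_trans.
  { apply (coprime_orbit_sum_bound p s Hp Hsp omega_weight omega_weight_1).
    - intros q D [Hq _] _. apply omega_weight_mul. lia.
    - exact omega_weight_new_prime.
    - lia.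
    - destruct Ht as [Ht1 Hmin]. split; [exact Ht1|split; [lia|exact Hmin]].
    - apply Nat.divide_refl. }
  eapply Rle_trans; [apply omega_weight_bound; lia|].
  apply Rmult_le_compat_l; [lra|]. apply Rle_Rpower; [|lra].
  replace 1 with (INR 1) by reflexivity. apply le_INR. lia.
Qed.
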